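(* Let $G=(V,E)$ be an undirected unweighted graph on $n$ nodes and let $H$ be the subgraph produced by the construction described in the context. For any two nodes $s,t\in V$ that are uncovered in $H$ and such that the canonical shortest path $\pi_G(s,t)$ has more than $\mu^3/n$ heavy nodes, we have $\texttt{dist}_H(s,t)\le\texttt{dist}_G(s,t)+4$ with probability at least $1-\frac{1}{n^3}$.
   Context: Let $\mu=\lceil n^{2/5}\log^{1/5}n\rceil$. A node is heavy if its degree in $G$ is at least $\mu$, and light otherwise; an edge is heavy if at least one endpoint is heavy. $\Gamma_G(v)$ denotes the set consisting of $v$ and its neighbors; for nodes $u,v$, $\pi_G(u,v)$ is a fixed (canonical) shortest $u\leadsto v$ path, $|P|$ is the number of edges of a path $P$, and $\circ$ is path concatenation. A node is uncovered in $H$ if not all of its incident edges in $G$ belong to $H$. Weak CSSSP: given $G$, gray edges $E_g\subseteq E$, source $s$, positive integer $g$, an $s\leadsto t$ path is $g$-short if it has fewer than $g$ gray edges and has the form $(s,s')\circ\pi_G(s',t')\circ(t',t)$ with $\pi_G(s',t')$ a shortest path and $(s,s'),(t',t)$ edges (or empty when $s'=s$, resp. $t'=t$). A solution outputs, for every $t$, an $s\leadsto t$ path $P(s,t)$ such that whenever an $s\leadsto t$ $g$-short path exists, $P(s,t)$ has at most $5g$ gray edges and $|P(s,t)|\le|P_g(s,t)|$ for every $s\leadsto t$ path $P_g(s,t)$ with fewer than $g$ gray edges (otherwise $P(s,t)$ is arbitrary). Construction of $H=(V,E')$: (1) $E'$ := all edges incident to light nodes. (2) Sample a set $S_1$ by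 including each node independently with probability $9\mu/n$; for each $x\in S_1$ add to $E'$ the edges of a BFS tree rooted at $x$ spanning $V$. (3) Sample a set $S_2$ by including each node independently with probability $1/\mu$; for each heavy node $x$ with $(\{x\}\cup\Gamma_G(x))\cap S_2=\varnothing$, add all edges incident to $x$ to $E'$. (4) For each heavy node $v\notin S_2$ with $\Gamma_G(v)\cap S_2\neq\varnothing$, choose arbitrarily one $x\in\Gamma_G(v)\cap S_2$ and add $(x,v)$ to $E'$. (5) For each $x_1\in S_2$, solve weak CSSSP on $G$ with source $x_1$, gray edges the heavy edges, and $g=\mu^3/n+2$, obtaining paths $P(x_1,x_2)$ for all $x_2\in V$; add the edges of $P(x_1,x_2)$ to $E'$ for every $x_2\in S_2$. The probability is over the random samples $S_1,S_2$. *)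

From Stdlib Require Import Reals.
From mathcomp Require Import all_boot.
Set Implicit Arguments. Unset Strict Implicit. Unset Printing Implicit Defensive.
Global Open Scope R_scope.

Section Defs.
Variable T : finType.
Variable adj : rel T.

Definition rpow (x y : R) : R := if Rle_dec x 0 then R0 else Rpower x y.

(* mu = ceil(n^{2/5} (ln n)^{1/5}); ceil x = - floor (- x) *)
Definition mu_real (n : nat) : R :=
  (rpow (INR n) (2/5) * rpow (ln (INR n)) (1/5)).
Definition mu (n : nat) : nat := Z.to_nat (- Int_part (- mu_real n))%Z.

Definition deg (v : T) : nat := #|[set u | adj v u]|.
Definition heavy (v : T) : bool := (mu #|T| <= deg v)%N.

Definition Gamma (v : T) : {set T} := [set u | (u == v) || adj v u].

Definition gray (u v : T) : bool := adj u v && (heavy u || heavy v).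

(* A walk from s is the list p of the vertices after s; it is an s~>t path in
   the graph r if consecutive vertices are adjacent and it ends at t.  Its
   number of edges is size p. *)
Definition is_path (r : rel T) (s : T) (p : seq T) (t : T) : bool :=
  path r s p && (last s p == t).

Definition ngray (s : T) (p : seq T) : nat :=
  count (fun e => gray e.1 e.2) (zip (s :: p) p).

Fixpoint within (r : rel T) (k : nat) (u v : T) : bool :=
  if k is k'.+1 then within r k' u v || [exists w, within r k' u w && r w v]
  else u == v.

(* dist_r(u,v) (equal to #|T| if v is unreachable from u) *)
Definition gdist (r : rel T) (u v : T) : nat :=
  find (fun k => within r k u v) (iota 0 #|T|).

Definition shortest_paths (pi : T -> T -> seq T) : Prop :=
  forall u v, is_path adj u (pi u v) v /\ size (pi u v) = gdist adj u v.

Definition g_short (pi : T -> T -> seq T) (g : R) (s t : T) (P : seq T) : Prop :=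
  is_path adj s P t /\ (INR (ngray s P) < g) /\
  exists s' t', (s' = s \/ adj s s') /\ (t' = t \/ adj t' t) /\
    P = (if s' == s then [::] else [:: s']) ++ pi s' t' ++
        (if t' == t then [::] else [:: t]).

(* P : T -> seq T (P t = P(x1,t)) solves weak CSSSP from source x1 *)
Definition weak_csssp (pi : T -> T -> seq T) (g : R) (x1 : T)
    (P : T -> seq T) : Prop :=
  forall t, is_path adj x1 (P t) t /\
    ((exists Q, g_short pi g x1 t Q) ->
       (INR (ngray x1 (P t)) <= 5 * g) /\
       forall Q, is_path adj x1 Q t -> (INR (ngray x1 Q) < g) ->
         (size (P t) <= size Q)%N).

Definition gpar : R := INR (mu #|T|) ^ 3 / INR #|T| + 2.

(* par x is a BFS tree rooted at x: par x v is the parent of v <> x *)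
Definition bfs_parents (par : T -> T -> T) : Prop :=
  forall x v, v != x -> adj (par x v) v /\ ((gdist adj x (par x v)).+1 = gdist adj x v)%N.

Definition walk_edge (s : T) (p : seq T) (u v : T) : bool :=
  ((u, v) \in zip (s :: p) p) || ((v, u) \in zip (s :: p) p).

Section H.
Variables (par : T -> T -> T) (chooser : {set T} -> T -> T)
          (Psol : T -> T -> seq T) (S1 S2 : {set T}).

Definition step3 (x : T) : bool := heavy x && [disjoint Gamma x & S2].
Definition step4 (v x : T) : bool :=
  [&& heavy v, v \notin S2, Gamma v :&: S2 != set0 & chooser S2 v == x].

Definition Hadj (u v : T) : bool :=
  adj u v &&
  [|| ~~ heavy u, ~~ heavy v,
      [exists x in S1, ((v != x) && (par x v == u))
                       || ((u != x) && (par x u == v))],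
      step3 u, step3 v,
      step4 u v, step4 v u
    | [exists x1 in S2, exists x2 in S2, walk_edge x1 (Psol x1 x2) u v]].
End H.

Definition uncovered (h : rel T) (v : T) : bool :=
  [exists u, adj v u && ~~ h v u].

(* probability of sampling exactly S when each node is taken independently
   with probability p *)
Definition weight (p : R) (S : {set T}) : R :=
  (\big[Rmult/R1]_(v in S) p * \big[Rmult/R1]_(v in ~: S) (1 - p)).

Definition p1 : R := Rmin 1 (9 * INR (mu #|T|) / INR #|T|).
Definition p2 : R := Rmin 1 (/ INR (mu #|T|)).

End Defs.

(* Let U be the union of the closed neighbourhoods Gamma(v) of the heavy nodes v
   of pi(s,t).  A node lies in Gamma(v) for at most three nodes v of a shortest
   path, so |U| >= mu * #heavy / 3 > mu^4 / (3n).  If the sample S1 meets U, say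
   x in Gamma(v) with v on pi(s,t), the BFS tree of x lies in H and gives
   dist_H(s,t) <= d(x,s) + d(x,t) <= d(s,t) + 2.  S1 misses U with probability
   (1 - 9 mu/n)^|U| <= exp(-3 mu^5 / n^2) <= n^-3, because mu^5 >= n^2 ln n. *)

From Stdlib Require Import Reals Lra ZArith.
From mathcomp Require Import all_boot zify.
From HB Require Import structures.
Set Implicit Arguments. Unset Strict Implicit. Unset Printing Implicit Defensive.

Lemma Rplus_associative : associative Rplus.
Proof. by move=> x y z; rewrite Rplus_assoc. Qed.
Lemma Rmult_associative : associative Rmult.
Proof. by move=> x y z; rewrite Rmult_assoc. Qed.

HB.instance Definition _ :=
  Monoid.isComLaw.Build R R0 Rplus Rplus_associative Rplus_comm Rplus_0_l.
HB.instance Definition _ :=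
  Monoid.isComLaw.Build R R1 Rmult Rmult_associative Rmult_comm Rmult_1_l.
HB.instance Definition _ := Monoid.isMulLaw.Build R R0 Rmult Rmult_0_l Rmult_0_r.
HB.instance Definition _ :=
  Monoid.isAddLaw.Build R Rmult Rplus Rmult_plus_distr_r Rmult_plus_distr_l.

Section Sampling.
Variable T : finType.
Implicit Types (p : R) (S U : {set T}).

Lemma big_Rmult_setC S (F G : T -> R) :
  \big[Rmult/R1]_i (if i \in S then F i else G i) =
  \big[Rmult/R1]_(i in S) F i * \big[Rmult/R1]_(i in ~: S) G i.
Proof.
rewrite (bigID (mem S)) /=; congr (_ * _); apply: eq_big => i //=.
- by move=> ->.
- by rewrite in_setC.
- by move/negbTE ->.
Qed.

Lemma big_Rmult_const S c : \big[Rmult/R1]_(i in S) c = c ^ #|S|.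
Proof. by rewrite big_const; elim: #|S| => //= n ->. Qed.

Lemma sum_weight p : \big[Rplus/R0]_(S : {set T}) weight p S = 1.
Proof.
have := bigA_distr R1 Rplus (fun _ : T => p) (fun _ => 1 - p).
rewrite big1 => [E|i _]; last by rewrite /= Rplus_minus.
by rewrite -[1]/R1 E; apply: eq_bigr => S _; rewrite big_Rmult_setC.
Qed.

Lemma sum_weight_disjoint p U :
  \big[Rplus/R0]_(S : {set T} | [disjoint S & U]) weight p S = (1 - p) ^ #|U|.
Proof.
have := bigA_distr R1 Rplus (fun i : T => if i \in U then 0 else p) (fun _ => 1 - p).
have -> : \big[Rmult/R1]_i ((if i \in U then 0 else p) + (1 - p)) =
          \big[Rmult/R1]_(i in U) (1 - p).
  rewrite (bigID (mem U)) /= [X in _ * X]big1 => [|i /negbTE ->]; last ring.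
  by rewrite Rmult_1_r; apply: eq_bigr => i ->; ring.
rewrite big_Rmult_const => ->; rewrite big_mkcond; apply: eq_bigr => S _.
rewrite big_Rmult_setC /weight; case: ifP => [SU | /negbT /pred0Pn [i /andP [iS iU]]].
  congr (_ * _); apply: eq_bigr => i iS.
  by move/disjointFr: SU => /(_ _ iS) ->.
by rewrite (bigD1 i) //= ifT //; ring.
Qed.

Lemma weight_ge0 p S : 0 <= p <= 1 -> 0 <= weight p S.
Proof.
move=> p01; apply: Rmult_le_pos;
  apply: (big_ind (fun x => 0 <= x)) => *; nra.
Qed.

Lemma sum_weight_meet p U :
  \big[Rplus/R0]_(S : {set T} | ~~ [disjoint S & U]) weight p S = 1 - (1 - p) ^ #|U|.
Proof.
rewrite -(sum_weight_disjoint p U) -{1}(sum_weight p).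
rewrite [in RHS](bigID (fun S => [disjoint S & U])) /=; ring.
Qed.

Lemma sum_weight2_ge_meet (P : {set T} -> {set T} -> bool) U p1 p2 :
  0 <= p1 <= 1 -> 0 <= p2 <= 1 ->
  (forall S1 S2, ~~ [disjoint S1 & U] -> P S1 S2) ->
  \big[Rplus/R0]_(S1 : {set T}) \big[Rplus/R0]_(S2 : {set T} | P S1 S2)
     (weight p1 S1 * weight p2 S2) >= 1 - (1 - p1) ^ #|U|.
Proof.
move=> p1_01 p2_01 hitP; apply: Rle_ge; rewrite -sum_weight_meet big_mkcond.
apply: (big_ind2 (fun x y => x <= y)) => [| x1 x2 y1 y2 | S1 _]; [lra | exact: Rplus_le_compat |].
case: ifP => [meet | _].
  rewrite (eq_bigl xpredT) => [| S2]; last exact: hitP.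
  by rewrite -big_distrr /= sum_weight Rmult_1_r; right.
apply: (big_ind (fun x => 0 <= x)) => [| x y | S2 _]; [lra | exact: Rplus_le_le_0_compat |].
by apply: Rmult_le_pos; apply: weight_ge0.
Qed.

End Sampling.

Lemma Rmin1_prob x : 0 <= x -> 0 <= Rmin 1 x <= 1.
Proof. by move=> x0; split; [apply: Rmin_glb; lra | apply: Rmin_l]. Qed.

Lemma rpow_ge0 x y : 0 <= rpow x y.
Proof. by rewrite /rpow; case: Rle_dec => ?; [right | left; apply: exp_pos]. Qed.

Lemma le_Int_part_ceil x : 0 <= x -> x <= INR (Z.to_nat (- Int_part (- x))).
Proof.
move=> x0; have [le_int gt_int] := base_Int_part (- x).
have z0 : (0 <= - Int_part (- x))%Z by apply: le_IZR; rewrite opp_IZR; lra.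
by rewrite INR_IZR_INZ Z2Nat.id // opp_IZR; lra.
Qed.

Lemma mu_real_le_mu n : mu_real n <= INR (mu n).
Proof.
by apply: le_Int_part_ceil; apply: Rmult_le_pos; apply: rpow_ge0.
Qed.

Lemma mu_real_pow5 n : (2 <= n)%N -> mu_real n ^ 5 = INR n ^ 2 * ln (INR n).
Proof.
move=> n2; have n1 : 1 < INR n by apply: lt_1_INR; apply/ltP.
have ln_gt0 : 0 < ln (INR n) by rewrite -ln_1; apply: ln_increasing; lra.
have Rpower_pow5 x y : 0 < x -> Rpower x y ^ 5 = Rpower x (y * INR 5).
  by move=> x0; rewrite -Rpower_pow ?Rpower_mult //; apply: exp_pos.
rewrite /mu_real /rpow; do 2![case: Rle_dec => ?; first lra].
rewrite Rpow_mult_distr !Rpower_pow5; [| lra ..].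
have -> : 2 / 5 * INR 5 = INR 2 by rewrite /=; field.
have -> : 1 / 5 * INR 5 = INR 1 by rewrite /=; field.
by rewrite !Rpower_pow; [ring | lra ..].
Qed.

Lemma mu_pow5_ge n : (2 <= n)%N -> INR n ^ 2 * ln (INR n) <= INR (mu n) ^ 5.
Proof.
move=> n2; rewrite -mu_real_pow5 //; apply: pow_incr; split; last exact: mu_real_le_mu.
by apply: Rmult_le_pos; apply: rpow_ge0.
Qed.

Lemma exp_pow x m : exp x ^ m = exp (x * INR m).
Proof.
elim: m => [|m IHm]; first by rewrite /= Rmult_0_r exp_0.
by rewrite -tech_pow_Rmult IHm -exp_plus S_INR; congr exp; ring.
Qed.

Lemma exp_le_exp x y : x <= y -> exp x <= exp y.
Proof. by case=> [/exp_increasing/Rlt_le | ->] //; right. Qed.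

Lemma pow_one_sub_le_exp p m : p <= 1 -> (1 - p) ^ m <= exp (- (p * INR m)).
Proof.
move=> p1; rewrite Ropp_mult_distr_l -exp_pow; apply: pow_incr.
by have := exp_ineq1_le (- p); lra.
Qed.

Lemma inv_pow3_exp x : 0 < x -> / x ^ 3 = exp (- (3 * ln x)).
Proof.
move=> x0; rewrite -Rpower_pow // /Rpower exp_Ropp; congr (/ exp _); rewrite /=; ring.
Qed.

Lemma three_ln_le_hit_rate n k m :
  (2 <= n)%N -> INR k > INR (mu n) ^ 3 / INR n -> (k * mu n <= 3 * m)%N ->
  3 * ln (INR n) <= 9 * INR (mu n) / INR n * INR m.
Proof.
move=> n2 k_gt km_le.
set M := INR (mu n); set N := INR n; rewrite -/M -/N in k_gt.
have N2 : 2 <= N by rewrite /N (_ : 2 = INR 2) //; apply: le_INR; apply/leP.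
have ln_gt0 : 0 < ln N by rewrite -ln_1; apply: ln_increasing; lra.
have M5 : N ^ 2 * ln N <= M ^ 5 by apply: mu_pow5_ge.
have M_gt0 : 0 < M.
  have [// | M_eq0] : 0 <= M by apply: pos_INR.
  by move: M5; rewrite -M_eq0; have := pow_lt N 2; nra.
have kM_le : INR k * M <= 3 * INR m.
  rewrite /M -mult_INR (_ : 3 = INR 3); last by rewrite /=; ring.
  by rewrite -mult_INR; apply: le_INR; apply/leP.
have kN_gt : M ^ 3 < INR k * N.
  rewrite (_ : M ^ 3 = M ^ 3 / N * N); last by field; lra.
  by apply: Rmult_lt_compat_r; lra.
(* 9 M m N >= 3 k M^2 N > 3 M^5 >= 3 N^2 ln N *)
have m_step : 0 <= (3 * INR m - INR k * M) * (3 * M * N) by apply: Rmult_le_pos; nra.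
have k_step : 0 < (INR k * N - M ^ 3) * M ^ 2 by apply: Rmult_lt_0_compat; [lra | apply: pow_lt].
apply: (Rmult_le_reg_r (N ^ 2)); first by apply: pow_lt; lra.
have -> : 9 * M / N * INR m * N ^ 2 = 9 * M * INR m * N by field; lra.
lra.
Qed.

Lemma miss_prob_le n k m :
  (1 <= n)%N -> INR k > INR (mu n) ^ 3 / INR n -> (k * mu n <= 3 * m)%N ->
  (1 - Rmin 1 (9 * INR (mu n) / INR n)) ^ m <= / INR n ^ 3.
Proof.
move=> n1 k_gt km_le; set N := INR n; set q := 9 * INR (mu n) / N.
have N1 : 1 <= N by rewrite /N -INR_1; apply: le_INR; apply/leP.
have q_ge0 : 0 <= q.
  by apply: Rle_mult_inv_pos; [have := pos_INR (mu n) | ]; lra.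
have exp_le := @pow_one_sub_le_exp (Rmin 1 q) m (Rmin_l _ _).
case: (ltnP n 2) => n2.
  have -> : N = 1 by rewrite /N (_ : n = 1%N) //; lia.
  rewrite pow1 Rinv_1; apply: Rle_trans exp_le _; rewrite -[in X in _ <= X]exp_0.
  apply: exp_le_exp.
  by have [p_ge0 _] := Rmin1_prob q_ge0; have := pos_INR m; nra.
have ln_gt0 : 0 < ln N.
  by rewrite -ln_1; apply: ln_increasing; [lra | apply: lt_1_INR; apply/ltP].
have rate := three_ln_le_hit_rate n2 k_gt km_le; rewrite -/q -/N in rate.
rewrite inv_pow3_exp; last lra.
case: (Rle_lt_dec 1 q) => q_ge1.
  have m_gt0 : (0 < m)%N by apply/ltP/INR_lt; rewrite INR_0; nra.
  by rewrite Rmin_left // Rminus_diag pow_i; [left; apply: exp_pos | apply/ltP].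
apply: Rle_trans exp_le _; apply: exp_le_exp.
by rewrite Rmin_right; lra.
Qed.

Section Counting.
Local Open Scope nat_scope.

Lemma sum_card_le_mul_card_bigcup (I T : finType) (P : {set I}) (A : I -> {set T}) c :
  (forall w, #|[set i in P | w \in A i]| <= c) ->
  \sum_(i in P) #|A i| <= c * #|\bigcup_(i in P) A i|.
Proof.
move=> few_covers; set U := \bigcup_(i in P) A i.
under eq_bigr do rewrite -sum1_card.
rewrite (exchange_big_dep (mem U)) => [|i w iP wA]; last exact/bigcupP/(ex_intro2 _ _ i).
rewrite mulnC -sum_nat_const; apply: leq_sum => w _.
by rewrite sum1dep_card; apply: few_covers.
Qed.

Lemma card_le_index_close (T : finType) (L : seq T) (A : {set T}) k :
  {subset A <= L} ->
  (forall v1 v2, v1 \in A -> v2 \in A -> index v2 L <= index v1 L + k) ->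
  #|A| <= k.+1.
Proof.
move=> AL close; case: (set_0Vmem A) => [-> | [v0 Av0]]; first by rewrite cards0.
have [vm Avm vm_min] := arg_minnP (fun v => index v L) Av0.
pose f v : 'I_k.+1 := inord (index v L - index vm L).
have f_val v : v \in A -> (f v : nat) = index v L - index vm L.
  by move=> Av; rewrite inordK // ltnS leq_subLR; apply: close.
have f_inj : {in A &, injective f}.
  move=> v v' Av Av' /(congr1 val); rewrite /= -/(f v) -/(f v') !f_val //.
  move=> /(congr1 (addn^~ (index vm L))).
  rewrite !subnK ?vm_min // => eq_idx.
  by rewrite -(nth_index v (AL _ Av)) eq_idx nth_index // AL.
by rewrite -(card_in_imset f_inj); apply: leq_trans (max_card _) _; rewrite card_ord.
Qed.

End Counting.

Section Walks.
Variables (T : finType) (r : rel T).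
Implicit Types (s u v w : T) (p : seq T).
Local Open Scope nat_scope.

Lemma withinP k u v :
  reflect (exists p, [/\ path r u p, last u p = v & size p <= k]) (within r k u v).
Proof.
elim: k v => [|k IHk] v /=.
  apply: (iffP eqP) => [->|[p [_ <-]]]; first by exists [::].
  by case: p.
apply: (iffP orP) => [[/IHk [p [pP pL pS]] | /existsP [w /andP [/IHk [p [pP pL pS]] wv]]] |].
- by exists p; split => //; apply: leqW.
- by exists (rcons p v); rewrite rcons_path last_rcons size_rcons pP pL wv.
case=> p [pP pL pS]; case: (leqP (size p) k) => [pk | kp].
  by left; apply/IHk; exists p.
right; apply/existsP; case/lastP: p pP pL pS kp => [//|p x].
rewrite rcons_path last_rcons size_rcons ltnS => /andP [pP px] <- pS kp.
by exists (last u p); rewrite px andbT; apply/IHk; exists p.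
Qed.

Lemma within_refl u : within r 0 u u.
Proof. exact: eqxx. Qed.

Lemma within_edge u v : r u v -> within r 1 u v.
Proof. by move=> uv; apply/withinP; exists [:: v]; rewrite /= uv. Qed.

Lemma within_mono k k' u v : k <= k' -> within r k u v -> within r k' u v.
Proof.
move=> kk' /withinP [p [pP pL pS]]; apply/withinP; exists p; split => //.
exact: leq_trans kk'.
Qed.

Lemma within_cat a b u w v : within r a u w -> within r b w v -> within r (a + b) u v.
Proof.
move=> /withinP [p [pP pL pS]] /withinP [q [qP qL qS]]; apply/withinP.
exists (p ++ q); rewrite cat_path last_cat pL pP qP qL size_cat; split => //.
exact: leq_add.
Qed.

Lemma within_sym k u v : symmetric r -> within r k u v -> within r k v u.
Proof.
move=> r_sym /withinP [p [pP pL pS]]; apply/withinP.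
exists (rev (belast u p)); split.
- by rewrite -pL rev_path (@eq_path _ _ r) // => x y; apply: r_sym.
- by rewrite -pL -(last_cons u) -rev_rcons -lastI rev_cons last_rcons.
- by rewrite size_rev size_belast.
Qed.

Lemma gdist_le k u v : within r k u v -> gdist r u v <= k.
Proof.
move=> uv; rewrite /gdist; case: (leqP #|T| k) => [Tk | kT].
  by apply: leq_trans (find_size _ _) _; rewrite size_iota.
rewrite leqNgt; apply/negP => /(before_find 0).
by rewrite nth_iota // add0n uv.
Qed.

Lemma last_take_nth s p i : i <= size p -> last s (take i p) = nth s (s :: p) i.
Proof.
move=> ip; rewrite (last_nth s) size_take.
case: (ltnP i (size p)) => [lt_ip | le_pi]; last first.
  have -> : i = size p by apply/eqP; rewrite eqn_leq ip le_pi.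
  by rewrite take_size.
by case: i ip lt_ip => //= j _ lt_jp; rewrite nth_take.
Qed.

Lemma within_take s p i : path r s p -> i <= size p -> within r i s (nth s (s :: p) i).
Proof.
move=> sp ip; apply/withinP; exists (take i p); split.
- exact: take_path.
- exact: last_take_nth.
- by rewrite size_take; case: ltnP.
Qed.

Lemma within_drop s p i :
  path r s p -> i <= size p -> within r (size p - i) (nth s (s :: p) i) (last s p).
Proof.
move=> sp ip; apply/withinP; exists (drop i p); split.
- by move: sp; rewrite -{1}(cat_take_drop i p) cat_path last_take_nth // => /andP [].
- by rewrite -last_take_nth // -last_cat cat_take_drop.
- by rewrite size_drop.
Qed.

Section Geodesic.
Variables (s : T) (p : seq T).
Hypotheses (sp : path r s p) (p_gdist : size p = gdist r s (last s p)).

Lemma geodesic_shortcut i j m :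
  i <= j -> j <= size p -> within r m (nth s (s :: p) i) (nth s (s :: p) j) -> j - i <= m.
Proof.
move=> ij jp short.
have := gdist_le (within_cat (within_cat (within_take sp (leq_trans ij jp)) short)
                             (within_drop sp jp)).
rewrite -p_gdist; lia.
Qed.

Lemma geodesic_uniq : uniq (s :: p).
Proof.
apply/negPn/negP => /(uniqPn s) [i [j [ij jp eq_ij]]].
have := geodesic_shortcut (ltnW ij) jp; rewrite eq_ij => /(_ 0 (within_refl _)).
lia.
Qed.

End Geodesic.
End Walks.

Definition heavy_nbhd (T : finType) (adj : rel T) (L : seq T) : {set T} :=
  \bigcup_(v in [set v | (v \in L) && heavy adj v]) Gamma adj v.

Section Neighbourhoods.
Variables (T : finType) (adj : rel T).
Hypothesis adj_sym : symmetric adj.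
Local Open Scope nat_scope.

Lemma within_Gamma v w : w \in Gamma adj v -> within adj 1 v w.
Proof.
rewrite inE => /orP [/eqP -> | vw]; last exact: within_edge.
exact: within_mono (within_refl _ _).
Qed.

Variables (s : T) (p : seq T).
Hypotheses (sp : path adj s p) (p_gdist : size p = gdist adj s (last s p)).

Lemma geodesic_index_close v1 v2 w :
  v1 \in s :: p -> v2 \in s :: p -> w \in Gamma adj v1 -> w \in Gamma adj v2 ->
  index v2 (s :: p) <= index v1 (s :: p) + 2.
Proof.
move=> v1p v2p v1w v2w.
case: (leqP (index v2 (s :: p)) (index v1 (s :: p))) => [le21 | lt12]; first lia.
have v1v2 : within adj 2 v1 v2.
  exact: within_cat (within_Gamma v1w) (within_sym adj_sym (within_Gamma v2w)).
have := geodesic_shortcut sp p_gdist (ltnW lt12); rewrite -ltnS index_mem v2p !nth_index //.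
by move=> /(_ 2 isT v1v2); lia.
Qed.

Lemma count_heavy_le_heavy_nbhd :
  count (heavy adj) (s :: p) * mu #|T| <= 3 * #|heavy_nbhd adj (s :: p)|.
Proof.
set Hp := [set v | (v \in s :: p) && heavy adj v].
have card_Hp : #|Hp| = count (heavy adj) (s :: p).
  rewrite -size_filter -(card_uniqP (filter_uniq _ (geodesic_uniq sp p_gdist))).
  by apply: eq_card => v; rewrite !inE mem_filter andbC.
rewrite -card_Hp -sum_nat_const; apply: leq_trans (sum_card_le_mul_card_bigcup _).
  apply: leq_sum => v; rewrite inE => /andP [_ heavy_v].
  apply: leq_trans heavy_v (subset_leq_card _); apply/subsetP => u.
  by rewrite !inE => ->; rewrite orbT.
move=> w; apply: (@card_le_index_close _ (s :: p)) => [v | v1 v2].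
  by rewrite !inE => /andP [/andP []].
move=> /setIdP [/setIdP [v1p _] v1w] /setIdP [/setIdP [v2p _] v2w].
exact: geodesic_index_close v1p v2p v1w v2w.
Qed.

Lemma gdist_Gamma_geodesic v x :
  v \in s :: p -> x \in Gamma adj v -> gdist adj x s + gdist adj x (last s p) <= size p + 2.
Proof.
move=> vp vx; set i := index v (s :: p).
have ip : i <= size p by rewrite -ltnS; rewrite -index_mem in vp.
have sv : within adj i s v by rewrite -(nth_index s vp); apply: within_take.
have vt : within adj (size p - i) v (last s p).
  by rewrite -{1}(nth_index s vp); apply: within_drop.
have xv := within_sym adj_sym (within_Gamma vx).
have xs := gdist_le (within_cat xv (within_sym adj_sym sv)).
have xt := gdist_le (within_cat xv vt).
lia.
Qed.

End Neighbourhoods.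

Section Spanner.
Variables (T : finType) (adj : rel T) (par : T -> T -> T) (chooser : {set T} -> T -> T).
Variables (Psol : T -> T -> seq T) (S1 S2 : {set T}).
Local Notation H := (Hadj adj par chooser Psol S1 S2).
Local Open Scope nat_scope.

Lemma Hadj_sym : symmetric adj -> symmetric H.
Proof.
move=> adj_sym u v; rewrite /Hadj adj_sym; congr (_ && _).
have -> : [exists x in S1, ((v != x) && (par x v == u)) || ((u != x) && (par x u == v))] =
          [exists x in S1, ((u != x) && (par x u == v)) || ((v != x) && (par x v == u))].
  by apply: eq_existsb => x; rewrite orbC.
have -> : [exists x1 in S2, exists x2 in S2, walk_edge x1 (Psol x1 x2) u v] =
          [exists x1 in S2, exists x2 in S2, walk_edge x1 (Psol x1 x2) v u].
  apply: eq_existsb => x1; congr (_ && _); apply: eq_existsb => x2; congr (_ && _).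
  exact: orbC.
rewrite orbCA; congr (_ || (_ || (_ || _))).
rewrite orbCA; congr (_ || (_ || _)).
exact: orbCA.
Qed.

Hypothesis par_bfs : bfs_parents adj par.

Lemma Hadj_bfs_edge x y : x \in S1 -> y != x -> H (par x y) y.
Proof.
move=> xS1 yx; have [par_adj _] := par_bfs yx.
rewrite /Hadj par_adj; apply/orP; right; apply/orP; right; apply/orP; left.
by apply/existsP; exists x; rewrite xS1 yx eqxx.
Qed.

Lemma within_Hadj_bfs x y : x \in S1 -> within H (gdist adj x y) x y.
Proof.
move=> xS1; move xy: (gdist adj x y) => k.
elim: k y xy => [|k IHk] y xy; case: (eqVneq y x) => [-> | yx].
- exact: within_refl.
- by have [_] := par_bfs yx; rewrite xy.
- exact: within_mono (within_refl _ _).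
have [_] := par_bfs yx; rewrite xy => /succn_inj par_dist.
rewrite -addn1; apply: within_cat (IHk _ par_dist) (within_edge (Hadj_bfs_edge xS1 yx)).
Qed.

Lemma within_Hadj_via_S1 x s t :
  symmetric adj -> x \in S1 -> within H (gdist adj x s + gdist adj x t) s t.
Proof.
move=> adj_sym xS1.
exact: within_cat (within_sym (Hadj_sym adj_sym) (within_Hadj_bfs s xS1)) (within_Hadj_bfs t xS1).
Qed.

End Spanner.

Lemma p1_prob (T : finType) : (0 < #|T|)%N -> 0 <= p1 T <= 1.
Proof.
move=> T_gt0; apply: Rmin1_prob; apply: Rle_mult_inv_pos; last exact/lt_0_INR/ltP.
by have := pos_INR (mu #|T|); lra.
Qed.

Lemma p2_prob (T : finType) : 0 <= p2 T <= 1.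
Proof.
apply: Rmin1_prob; case: (posnP (mu #|T|)) => [-> | mu_gt0]; first by rewrite Rinv_0; right.
exact/Rlt_le/Rinv_0_lt_compat/lt_0_INR/ltP.
Qed.

Theorem lemma6 (T : finType) (adj : rel T)
  (adj_sym : symmetric adj) (adj_irr : irreflexive adj)
  (adj_conn : forall u v : T, connect adj u v)
  (pi : T -> T -> seq T) (Hpi : shortest_paths adj pi)
  (par : T -> T -> T) (Hpar : bfs_parents adj par)
  (chooser : {set T} -> T -> T)
  (Hchooser : forall (S : {set T}) (v : T),
     Gamma adj v :&: S != set0 -> chooser S v \in Gamma adj v :&: S)
  (Psol : T -> T -> seq T)
  (HPsol : forall x1 : T, weak_csssp adj pi (gpar T) x1 (Psol x1))
  (s t : T)
  (Hheavy : (INR (count (heavy adj) (s :: pi s t))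
               > INR (mu #|T|) ^ 3 / INR #|T|)) :
  (\big[Rplus/R0]_(S1 : {set T})
     \big[Rplus/R0]_(S2 : {set T} |
        (uncovered adj (Hadj adj par chooser Psol S1 S2) s
         && uncovered adj (Hadj adj par chooser Psol S1 S2) t)
        ==> within (Hadj adj par chooser Psol S1 S2) (gdist adj s t + 4)%N s t)
       (weight (p1 T) S1 * weight (p2 T) S2)
   >= 1 - / INR #|T| ^ 3).
Proof.
have T_gt0 : (0 < #|T|)%N by apply/card_gt0P; exists s.
have [/andP [st_path /eqP st_last] st_size] := Hpi s t.
have st_gdist : size (pi s t) = gdist adj s (last s (pi s t)) by rewrite st_last.
set U := heavy_nbhd adj (s :: pi s t).
have hit_close (S1 S2 : {set T}) : ~~ [disjoint S1 & U] ->
    within (Hadj adj par chooser Psol S1 S2) (gdist adj s t + 4) s t.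
  case/pred0Pn => x /andP [xS1 /bigcupP [v /setIdP [vp _] vx]].
  apply: within_mono (within_Hadj_via_S1 chooser Psol S2 Hpar s t adj_sym xS1).
  have := gdist_Gamma_geodesic adj_sym st_path st_gdist vp vx.
  by rewrite st_last -st_size; lia.
apply: Rge_trans (sum_weight2_ge_meet (U := U) (p1_prob T_gt0) (p2_prob T) _) _.
  by move=> S1 S2 /hit_close close; apply/implyP.
have := miss_prob_le T_gt0 Hheavy (count_heavy_le_heavy_nbhd adj_sym st_path st_gdist).
rewrite -/(p1 T) -/U; lra.
Qed.
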